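(* Fix $\alpha\in\mathbb{R}$ and suppose $Q_\alpha$ satisfies assumption (H). Fix $N\ge1$, $n\ge1$, $1\le m\le n$, $x\in\mathsf{X}$ and $\delta\in(0,1)$. Run the particle system with $Q=Q_\alpha$ (and arbitrary initial $\mu$) up to time $2n$ and, conditionally on $\mathcal{F}_{2n}$, let $(\check X_p;p=0,\dots,m)$ be a non-homogeneous Markov chain with $\check X_0=x$ and $\check X_p\sim P^N_{(n+p,2n)}(\check X_{p-1},\cdot)$ for $p\ge1$. Writing $\check{\mathbb{E}}_N$ for expectation under the joint law of the particle system and $(\check X_p)$, \[ \check{\mathbb{E}}_N\left[\mathbb{I}\Big[\sum_{p=1}^mU(\check X_p)>m\delta\Big]\prod_{p=0}^{m-1}\frac{\lambda^N_{n+p}}{G_\alpha(\check X_p)}\cdot\frac{h^N_{n,2n}(\check X_0)}{h^N_{n+m,2n}(\check X_m)}\right]=\pi_m(\delta), \] where $\pi_m(\delta):=\mathbb{P}_x\left(\sum_{p=1}^mU(X_p)>m\delta\right)$ for a Markov chain $(X_p)$ with transition kernel $M$ started at $X_0=x$.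
   Context: Setting: $(\mathsf{X},\mathcal{B})$ is a measurable space with countably generated $\sigma$-algebra; $\mathcal{P}$ the probability measures. For a measure $\mu$, kernel $K$, function $\varphi$: $\mu(\varphi)=\int\varphi\,d\mu$, $K(\varphi)(x)=\int K(x,dy)\varphi(y)$, $\mu K(\cdot)=\int\mu(dx)K(x,\cdot)$; $1$ the constant function one. $M$ is a Markov kernel, $U:\mathsf{X}\to[-1,1]$ measurable, $G_\alpha(x):=e^{\alpha U(x)}$ and $Q_\alpha(x,dy):=G_\alpha(x)M(x,dy)$. Assumption (H) for a kernel $Q$: there is a probability measure $\nu$ such that for all $x$, $Q(x,\cdot)$ is equivalent to $\nu$ with density $q(x,x')$ satisfying $\epsilon^-\le q\le\epsilon^+$ for constants $0<\epsilon^-,\epsilon^+<\infty$. With $Q=Q_\alpha$ and $G=G_\alpha$: for $\eta\in\mathcal{P}$, $\Phi(\eta):=\eta Q/\eta Q(1)$. Particle system: fix $N\ge1$, $\mu\in\mathcal{P}$; $\zeta_0^1,\dots,\zeta_0^N$ i.i.d. $\mu$; for $k\ge1$, conditionally on the past, the $\zeta_k^i$ are i.i.d. with law $\Phi(\eta^N_{k-1})$, where $\eta_k^N:=\frac1N\sum_{i=1}^N\delta_{\zeta_k^i}$; $\mathcal{F}_k:=\sigma(\zeta_0,\dots,\zeta_k)$. Define $\lambda_k^N:=\eta_k^N(G)$, $Q_k^N(x,dx'):=\frac{dQ(x,\cdot)}{d\Phi(\eta_{k-1}^N)}(x')\,\eta_k^N(dx')$ for $k\ge1$, $Q^N_{k,k}:=Id$,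 $Q^N_{p,k}:=Q^N_{p+1}\cdots Q^N_k$ for $p<k$, $h^N_{k,k}:=1$, $h_{p,k}^N(x):=\frac{Q^N_{p,k}(1)(x)}{\eta^N_pQ^N_{p,k}(1)}$ for $0\le p<k$, and for $1\le p\le k$ the random Markov kernel $P^N_{(p,k)}(x,dx'):=\frac{Q^N_p(x,dx')h^N_{p,k}(x')}{\lambda^N_{p-1}h^N_{p-1,k}(x)}$. *)

From HB Require Import structures.
From mathcomp Require Import all_boot all_order all_algebra.
From mathcomp Require Import all_classical all_reals all_analysis.
Set Implicit Arguments. Unset Strict Implicit. Unset Printing Implicit Defensive.
Import Order.TTheory GRing.Theory Num.Theory.
Local Open Scope classical_set_scope.
Local Open Scope ring_scope.

Definition countably_generated d (X : measurableType d) : Prop :=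
  exists A : nat -> set X, forall B : set X, measurable B <-> <<s range A >> B.

Definition Galpha (R : realType) (T : Type) (alpha : R) (U : T -> R) (x : T) : R :=
  expR (alpha * U x).

Definition upd (T : Type) (f : nat -> T) (s : nat) (v : T) : nat -> T :=
  fun u => if u == s then v else f u.

Definition ncons (T : Type) (z : T) (s : nat -> T) : nat -> T :=
  fun i => if i is i'.+1 then s i' else z.

Section Particles.
Context {d : measure_display} {X : measurableType d} {R : realType}.
Local Open Scope ereal_scope.

(* \int mu(dz_0) \int mu(dz_1) ... \int mu(dz_{k-1}) f(z) :
   integral of f w.r.t. the k-fold product mu^{\otimes k} (iterated, Tonelli) *)
Fixpoint iter_int (mu : {measure set X -> \bar R}) (k : nat)
    (f : (nat -> X) -> \bar R) : \bar R :=
  match k with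
  | 0%N => f (fun _ => point)
  | k'.+1 => \int[mu]_z iter_int mu k' (fun s => f (ncons z s))
  end.

Local Close Scope ereal_scope.

Definition emp (N : nat) (z : nat -> X) (f : X -> R) : R :=
  (\sum_(i < N) f (z i)) / N%:R.

Lemma Phi_weight_ge0 (N : nat) (alpha : R) (U : X -> R) (z : nat -> X) (i : nat) :
  0 <= Galpha alpha U (z i) / \sum_(j < N) Galpha alpha U (z j).
Proof.
by apply: divr_ge0; [exact: expR_ge0 | apply: sumr_ge0 => j _; exact: expR_ge0].
Qed.

(* Phi(eta^N) for the empirical measure eta^N of z, with Q = Q_alpha:
   Phi(eta)(A) = eta Q(A) / eta Q(1) = sum_i G(z_i) M(z_i, A) / sum_j G(z_j) *)
Definition Phi (N : nat) (alpha : R) (U : X -> R) (M : R.-pker X ~> X)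
    (z : nat -> X) : {measure set X -> \bar R} :=
  msum (fun i => mscale (NngNum (Phi_weight_ge0 N alpha U z i)) (M (z i))) N.

(* Expectation of f(zeta_0, ..., zeta_T) for the particle system:
   zeta_0^i iid mu, zeta_k^i iid Phi(eta_{k-1}^N) given the past.
   A history is zeta : nat -> nat -> X, zeta k i = zeta_k^i. *)
Fixpoint evol (N : nat) (alpha : R) (U : X -> R) (M : R.-pker X ~> X)
    (j t : nat) (zeta : nat -> nat -> X) (f : (nat -> nat -> X) -> \bar R)
    : \bar R :=
  match j with
  | 0%N => f zeta
  | j'.+1 => iter_int (Phi N alpha U M (zeta t)) N
               (fun z => evol N alpha U M j' t.+1 (upd zeta t.+1 z) f)
  end.

Definition ps_expect (N : nat) (alpha : R) (U : X -> R) (M : R.-pker X ~> X)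
    (mu : probability X R) (T : nat) (f : (nat -> nat -> X) -> \bar R) : \bar R :=
  iter_int mu N (fun z => evol N alpha U M T 0 (fun _ => z) f).

Section Quantities.
Variables (N : nat) (alpha : R) (U : X -> R) (q : X -> X -> R)
          (zeta : nat -> nat -> X).

Let G := Galpha alpha U.

Definition lam (k : nat) : R := emp N (zeta k) G.

(* version of dQ(x,.)/dPhi(eta_{k-1}^N) (y) = q(x,y) eta Q(1) / eta(q(.,y)),
   with eta = eta_{k-1}^N (so eta Q(1) = lambda_{k-1}^N since M is Markov) *)
Definition rn (k : nat) (x y : X) : R :=
  q x y * lam k.-1 / emp N (zeta k.-1) (fun z => q z y).

Definition Qk (k : nat) (g : X -> R) (x : X) : R :=
  \sum_(i < N) (rn k x (zeta k i) / N%:R) * g (zeta k i).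

(* QQr j p = Q^N_{p, p+j}(1) *)
Fixpoint QQr (j p : nat) : X -> R :=
  match j with
  | 0%N => fun _ => 1
  | j'.+1 => Qk p.+1 (QQr j' p.+1)
  end.

Definition QQ1 (p k : nat) : X -> R := QQr (k - p) p.

Definition hh (p k : nat) (x : X) : R :=
  if p == k then 1 else QQ1 p k x / emp N (zeta p) (QQ1 p k).

(* density of the random Markov kernel P^N_{(p,k)}(x, .) with respect to
   the counting of the atoms zeta_p^i:
   P^N_{(p,k)}(x,dx') = Q_p^N(x,dx') h_{p,k}(x') / (lambda_{p-1} h_{p-1,k}(x)) *)
Definition Pw (p k : nat) (x y : X) : R :=
  (rn p x y / N%:R) * hh p k y / (lam p.-1 * hh p.-1 k x).

(* integral of f(Xc_0, ..., Xc_m) w.r.t. the law of the non-homogeneous chain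
   Xc_{s+1} ~ P^N_{(t0+s+1, k)}(Xc_s, .), steps s, s+1, ..., s+j-1.
   Since P^N_{(p,k)}(x,.) = sum_i Pw p k x (zeta_p^i) delta_{zeta_p^i},
   the integral is a finite sum. *)
Fixpoint chain_int (t0 k : nat) (j s : nat) (path : nat -> X)
    (f : (nat -> X) -> R) : R :=
  match j with
  | 0%N => f path
  | j'.+1 => \sum_(i < N)
       Pw (t0 + s.+1) k (path s) (zeta (t0 + s.+1) i) *
       chain_int t0 k j' s.+1 (upd path s.+1 (zeta (t0 + s.+1) i)) f
  end.

End Quantities.

Local Open Scope ereal_scope.

Fixpoint mc_int (M : R.-pker X ~> X) (j s : nat) (path : nat -> X)
    (f : (nat -> X) -> \bar R) : \bar R :=
  match j with
  | 0%N => f path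
  | j'.+1 => \int[M (path s)]_y mc_int M j' s.+1 (upd path s.+1 y) f
  end.

Local Close Scope ereal_scope.

Definition pi_m (M : R.-pker X ~> X) (U : X -> R) (x : X) (m : nat) (delta : R)
    : \bar R :=
  mc_int M m 0 (fun _ => x)
    (fun path => (if m%:R * delta < \sum_(1 <= p < m.+1) U (path p)
                  then 1 else 0)%:E).

End Particles.

From Pilot Require Import Defs.
From HB Require Import structures.
From mathcomp Require Import all_boot all_order all_algebra.
From mathcomp Require Import all_classical all_reals all_analysis.
From mathcomp Require Import measurable_realfun.
From mathcomp Require Import ring zify.
Import Order.TTheory GRing.Theory Num.Theory.
Local Open Scope classical_set_scope.
Local Open Scope ring_scope.

(* Under (H), q(x, .) is a density of Q(x, .) = G(x) M(x, .) with respect to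
   nu, and Phi(eta) has density sum_i q(z^i, .) / sum_i G(z^i).  So if the
   particles zeta_p^1, ..., zeta_p^N are i.i.d. Phi(eta_{p-1}^N), the atom
   weights (1/N) dQ(x, .)/dPhi(eta_{p-1}^N)(zeta_p^i) of the empirical kernel
   Q_p^N(x, .) integrate any g to Q g(x) = G(x) M g(x): dividing by G(x), one
   generation of particles is an unbiased estimate of one step of M.
   In the weight of the statement the factors lambda^N_{n+p}, G and h^N
   telescope against the normalisations of the kernels P^N_{(n+p,2n)},
   leaving a sum over particle paths of products of these unbiased weights.
   Integrating out the generations from the last one, those after n+m
   contribute nothing and each of n+m, ..., n+1 becomes a step of M. *)

Lemma upd_eq (T : Type) (f : nat -> T) s v : upd f s v s = v.
Proof. by rewrite /upd eqxx. Qed.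

Lemma upd_neq (T : Type) (f : nat -> T) s v u : u != s -> upd f s v u = f u.
Proof. by rewrite /upd => /negbTE ->. Qed.

Lemma measurable_funV_gt0 {d} {T : measurableType d} {R : realType} (f : T -> R) :
  measurable_fun setT f -> (forall x, 0 < f x) ->
  measurable_fun setT (fun x => (f x)^-1).
Proof.
move=> mf f_gt0.
have -> : (fun x => (f x)^-1) = expR \o (fun x => - ln (f x)).
  by apply/funext => x /=; rewrite expRN lnK // posrE.
apply: measurableT_comp; first exact: measurable_expR.
by apply: measurable_funN; apply: measurableT_comp mf; exact: measurable_ln.
Qed.

Section kernel_comp.
Context {d d'} {X : measurableType d} {T : measurableType d'} {R : realType}.
Variables (M : R.-pker X ~> X) (g : T -> X) (mg : measurable_fun setT g).

Definition kernel_comp : T -> {measure set X -> \bar R} := fun t => M (g t).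

Let measurable_kernel_comp A :
  measurable A -> measurable_fun setT (kernel_comp ^~ A).
Proof. by move=> mA; exact: measurableT_comp (measurable_kernel M A mA) mg. Qed.

HB.instance Definition _ :=
  isKernel.Build _ _ T X R kernel_comp measurable_kernel_comp.

Let kernel_comp_setT t : kernel_comp t setT = 1%E.
Proof. exact: prob_kernel. Qed.

HB.instance Definition _ :=
  Kernel_isProbability.Build _ _ T X R kernel_comp kernel_comp_setT.

Lemma measurable_integral_kernel_comp (F : T * X -> \bar R) :
  (forall z, 0 <= F z)%E -> measurable_fun setT F ->
  measurable_fun setT (fun t => \int[M (g t)]_y F (t, y))%E.
Proof. exact: (measurable_fun_integral_sfinite_kernel F kernel_comp). Qed.

End kernel_comp.

Section kernel_at.
Context {d} {X : measurableType d} {R : realType} (M : R.-pker X ~> X).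

(* [M b] viewed as a finite measure, which the Radon-Nikodym theory requires *)
Definition kernel_at (b : X) : set X -> \bar R := M b.
HB.instance Definition _ b := Measure.copy (kernel_at b) (M b).
HB.instance Definition _ b :=
  @Measure_isFinite.Build _ X R (kernel_at b) (finite_kernel_measure M b).

End kernel_at.

Section integral_density.
Context {d} {T : measurableType d} {R : realType}.
Variables (mu : {sigma_finite_measure set T -> \bar R})
  (nu : {finite_measure set T -> \bar R}) (g : T -> R).
Hypotheses (mg : measurable_fun setT g)
  (nuE : forall A, measurable A -> nu A = (\int[mu]_(x in A) (g x)%:E)%E).
Local Open Scope ereal_scope.

Lemma integral_density (f : T -> \bar R) : (forall x, 0 <= f x) ->
    measurable_fun setT f ->
  \int[nu]_x f x = \int[mu]_x (f x * (g x)%:E).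
Proof.
move=> f0 mf.
have numu : nu `<< mu.
  apply/null_content_dominatesP => A mA muA0; rewrite nuE //.
  by apply: null_set_integral => //; exact/measurable_funTS/measurable_EFinP.
have mRN : measurable_fun setT (Radon_Nikodym_SigmaFinite.f nu mu).
  exact/measurable_int/Radon_Nikodym_SigmaFinite.f_integrable.
have RN_g : ae_eq mu setT (Radon_Nikodym_SigmaFinite.f nu mu) (EFin \o g).
  apply: integral_ae_eq => //.
  - exact: Radon_Nikodym_SigmaFinite.f_integrable.
  - exact/measurable_EFinP.
  - by move=> E _ mE; rewrite -Radon_Nikodym_SigmaFinite.f_integral // nuE.
rewrite -(Radon_Nikodym_SigmaFinite.change_of_variables numu) //.
apply: ae_eq_integral => //.
- exact: emeasurable_funM.
- by apply: emeasurable_funM => //; exact/measurable_EFinP.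
- exact: ae_eqe_mul2l.
Qed.

End integral_density.

Section iter_int.
Context {d} {X : measurableType d} {R : realType}.
Variables (mu : {measure set X -> \bar R}) (mu_setT : mu setT = 1%E).
Local Open Scope ereal_scope.

Lemma integral_cst_prob (c : \bar R) : \int[mu]_z c = c.
Proof. by rewrite integral_cst // mu_setT mule1. Qed.

Lemma iter_int_cst k (c : \bar R) : iter_int mu k (fun _ => c) = c.
Proof. by elim: k => [//|k IH] /=; rewrite IH integral_cst_prob. Qed.

Lemma iter_int_sum (a : X -> \bar R) : (forall y, 0 <= a y) ->
    measurable_fun setT a -> forall K,
  iter_int mu K (fun z => \sum_(i < K) a (z i)) = \sum_(i < K) \int[mu]_y a y.
Proof.
move=> a0 ma K.
suff sum_shift c : 0 <= c -> iter_int mu K (fun z => c + \sum_(i < K) a (z i)) =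
    c + \sum_(i < K) \int[mu]_y a y.
  rewrite -[RHS]add0e -sum_shift //; congr (iter_int _ _ _).
  by apply/funext => z; rewrite add0e.
elim: K c => [|K IH] c c0 /=; first by rewrite !big_ord0.
set S := (\sum_(i < K) \int[mu]_y a y)%E.
have S0 : 0 <= S by apply: sume_ge0 => i _; exact: integral_ge0.
have shift z : iter_int mu K (fun s => c + \sum_(i < K.+1) a (Defs.ncons z s i)) =
    (c + S) + a z.
  rewrite addeAC -IH ?adde_ge0 //; congr (iter_int _ _ _); apply/funext => s.
  by rewrite big_ord_recl addeA.
under eq_integral => z _ do rewrite shift.
rewrite ge0_integralD // ?adde_ge0 //.
by rewrite integral_cst_prob big_ord_recl (addeC (\int[mu]_y a y)) [RHS]addeA.
Qed.

End iter_int.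

Section markov_chain.
Context {d} {X : measurableType d} {R : realType} (M : R.-pker X ~> X).
Local Open Scope ereal_scope.

Definition path_measurable (f : (nat -> X) -> \bar R) :=
  forall d' (T : measurableType d') (phi : T -> nat -> X),
  (forall i, measurable_fun setT (phi ^~ i)) ->
  measurable_fun setT (fun t => f (phi t)).

Lemma measurable_upd (f : (nat -> X) -> \bar R) path s :
  path_measurable f -> measurable_fun setT (fun y => f (upd path s y)).
Proof.
move=> mf; apply: (mf _ X (upd path s)) => i.
by rewrite /upd; case: (i == s); [exact: measurable_id | exact: measurable_cst].
Qed.

Lemma mc_int_ge0 j s path (f : (nat -> X) -> \bar R) :
  (forall path, 0 <= f path) -> 0 <= mc_int M j s path f.
Proof.
elim: j s path => [|j IH] s path f0 /=; first exact: f0.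
by apply: integral_ge0 => y _; exact: IH.
Qed.

Lemma path_measurable_mc_int j s (f : (nat -> X) -> \bar R) :
  (forall path, 0 <= f path) -> path_measurable f ->
  path_measurable (fun path => mc_int M j s path f).
Proof.
elim: j s => [//|j IH] s f0 mf d' T phi mphi /=.
have := measurable_integral_kernel_comp M _ (mphi s)
  (fun ty => mc_int M j s.+1 (upd (phi ty.1) s.+1 ty.2) f); apply.
  by move=> z; exact: mc_int_ge0.
apply: (IH s.+1 f0 mf _ _ (fun ty => upd (phi ty.1) s.+1 ty.2)) => i.
rewrite /upd; case: (i == s.+1); first exact: measurable_snd.
exact: measurableT_comp (mphi i) measurable_fst.
Qed.

End markov_chain.

Section particle_model.
Context {d} {X : measurableType d} {R : realType}.
Variables (M : R.-pker X ~> X) (U : X -> R) (alpha : R) (nu : probability X R)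
  (q : X -> X -> R) (N : nat).
Hypotheses (N_gt0 : (0 < N)%N) (q_gt0 : forall x y, 0 < q x y)
  (mq : measurable_fun setT (fun xy : X * X => q xy.1 xy.2))
  (q_density : forall x A, measurable A ->
     ((Galpha alpha U x)%:E * M x A = \int[nu]_(y in A) (q x y)%:E)%E).

Local Notation G := (Galpha alpha U).
Local Notation lam := (lam N alpha U).
Local Notation rn := (rn N alpha U q).
Local Notation hh := (hh N alpha U q).
Local Notation Phi := (Phi N alpha U M).
Local Notation evol := (evol N alpha U M).

Lemma G_gt0 a : 0 < G a.
Proof. exact: expR_gt0. Qed.

Lemma natrN_gt0 : 0 < N%:R :> R.
Proof. by rewrite ltr0n. Qed.

Lemma sum_ord_gt0 (f : 'I_N -> R) : (forall i, 0 < f i) -> 0 < \sum_(i < N) f i.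
Proof.
move=> f_gt0; rewrite (bigD1 (Ordinal N_gt0)) //=.
apply: (lt_le_trans (f_gt0 (Ordinal N_gt0))); rewrite lerDl.
by apply: sumr_ge0 => i _; exact/ltW.
Qed.

Lemma emp_gt0 z (f : X -> R) : (forall y, 0 < f y) -> 0 < emp N z f.
Proof. by move=> f_gt0; rewrite divr_gt0 ?natrN_gt0 ?sum_ord_gt0. Qed.

Lemma lam_gt0 zeta k : 0 < lam zeta k.
Proof. exact/emp_gt0/G_gt0. Qed.

Lemma rn_gt0 zeta k a y : 0 < rn zeta k a y.
Proof.
apply: divr_gt0; first by rewrite mulr_gt0 ?q_gt0 ?lam_gt0.
by apply: emp_gt0 => z; exact: q_gt0.
Qed.

Lemma QQr_gt0 zeta j p a : 0 < QQr N alpha U q zeta j p a.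
Proof.
elim: j p a => [//|j IH] p a /=.
rewrite /Qk; apply: sum_ord_gt0 => i.
by rewrite mulr_gt0 // divr_gt0 ?rn_gt0 ?natrN_gt0.
Qed.

Lemma hh_gt0 zeta p k a : 0 < hh zeta p k a.
Proof.
rewrite /Defs.hh; case: eqP => // _.
by rewrite divr_gt0 ?emp_gt0 // => *; exact: QQr_gt0.
Qed.

(* [Mhat zeta p a] gives the atom weights of [Q_p^N(a, .) / G(a)], whose mean
   over generation [p] is [M(a, .)]. *)
Definition Mhat zeta p (a y : X) : R := rn zeta p a y / (N%:R * G a).

Fixpoint Mhat_chain zeta (t0 j s : nat) (path : nat -> X) (f : (nat -> X) -> R)
    : R :=
  match j with
  | 0%N => f path
  | j'.+1 => \sum_(i < N)
      Mhat zeta (t0 + s.+1) (path s) (zeta (t0 + s.+1) i) *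
      Mhat_chain zeta t0 j' s.+1 (upd path s.+1 (zeta (t0 + s.+1) i)) f
  end.

Lemma Mhat_gt0 zeta p a y : 0 < Mhat zeta p a y.
Proof. by rewrite /Mhat divr_gt0 ?rn_gt0 // mulr_gt0 ?natrN_gt0 ?G_gt0. Qed.

Lemma Mhat_ext zeta zeta' p a y : zeta p.-1 = zeta' p.-1 ->
  Mhat zeta p a y = Mhat zeta' p a y.
Proof. by move=> E; rewrite /Mhat /Defs.rn /Defs.lam E. Qed.

Lemma chain_int_telescope zeta t0 k m (f : (nat -> X) -> R) j s path :
  (s + j = m)%N ->
  chain_int N alpha U q zeta t0 k j s path (fun path => f path
      * (\prod_(0 <= p < m) (lam zeta (t0 + p) / G (path p)))
      * (hh zeta t0 k (path 0%N) / hh zeta (t0 + m) k (path m))) =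
  (\prod_(0 <= p < s) (lam zeta (t0 + p) / G (path p)))
    * (hh zeta t0 k (path 0%N) / hh zeta (t0 + s) k (path s))
    * Mhat_chain zeta t0 j s path f.
Proof.
elim: j s path => [|j IH] s path.
  by rewrite addn0 => <- /=; rewrite [RHS]mulrC !mulrA.
move=> sjm /=; rewrite mulr_sumr; apply: eq_bigr => i _.
rewrite IH; last by rewrite addSnnS.
set y := zeta (t0 + s.+1)%N i.
rewrite big_nat_recr //= upd_eq upd_neq ?neq_ltn ?ltnSn ?orbT //.
rewrite [upd path s.+1 y 0%N]upd_neq //.
rewrite (@eq_big_nat _ _ _ 0 s _
  (fun p => lam zeta (t0 + p) / G (path p))); last first.
  by move=> p /andP [_ ps]; rewrite upd_neq // neq_ltn ltnS ltnW.
rewrite /Pw /Mhat addnS /=.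
have := hh_gt0 zeta (t0 + s) k (path s); have := hh_gt0 zeta (t0 + s).+1 k y.
have := lam_gt0 zeta (t0 + s); have := G_gt0 (path s); have := natrN_gt0.
move=> *; field; by rewrite !gt_eqF.
Qed.

Lemma chain_int_Mhat_chain zeta t0 k m (f : (nat -> X) -> R) path :
  chain_int N alpha U q zeta t0 k m 0 path (fun path => f path
      * (\prod_(0 <= p < m) (lam zeta (t0 + p) / G (path p)))
      * (hh zeta t0 k (path 0%N) / hh zeta (t0 + m) k (path m))) =
  Mhat_chain zeta t0 m 0 path f.
Proof.
rewrite chain_int_telescope // big_geq // addn0 mul1r divff ?mul1r //.
by rewrite gt_eqF ?hh_gt0.
Qed.

Lemma Phi_setT z : (Phi z setT = 1)%E.
Proof.
transitivity (\sum_(i < N) ((G (z i) / \sum_(j < N) G (z j))%:E * M (z i) setT))%E;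
  first by [].
under eq_bigr do rewrite prob_kernel mule1.
by rewrite sumEFin -mulr_suml divff // gt_eqF // sum_ord_gt0 // => i; exact: G_gt0.
Qed.

Lemma evolS j t zeta (f : (nat -> nat -> X) -> \bar R) : evol j.+1 t zeta f =
  iter_int (Phi (zeta t)) N (fun z => evol j t.+1 (upd zeta t.+1 z) f).
Proof. by []. Qed.

Lemma evol_ext j t zeta (f g : (nat -> nat -> X) -> \bar R) :
  (forall zeta', (forall u, (u <= t)%N -> zeta' u = zeta u) -> f zeta' = g zeta') ->
  evol j t zeta f = evol j t zeta g.
Proof.
elim: j t zeta => [|j IH] t zeta fg /=; first exact: fg.
congr (iter_int _ _ _); apply/funext => z; apply: IH => zeta' zeta'E.
apply: fg => u ut; rewrite zeta'E ?(leqW ut) // upd_neq //.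
by rewrite neq_ltn ltnS ut.
Qed.

Lemma evol_cst j t zeta (c : \bar R) : evol j t zeta (fun _ => c) = c.
Proof.
elim: j t zeta => [//|j IH] t zeta /=.
under eq_fun do rewrite IH.
by rewrite iter_int_cst // Phi_setT.
Qed.

Lemma evol_add j k t zeta (f : (nat -> nat -> X) -> \bar R) :
  evol (j + k) t zeta f = evol j t zeta (fun zeta' => evol k (t + j) zeta' f).
Proof.
elim: j t zeta => [|j IH] t zeta /=; first by rewrite addn0.
by congr (iter_int _ _ _); apply/funext => z; rewrite IH addSnnS.
Qed.

Let mq_l b : measurable_fun setT (q b) := measurable_fun_pair2 b mq.

Lemma measurable_rn zeta t a : measurable_fun setT (rn zeta t a).
Proof.
apply: measurable_funM; first by apply: measurable_funM => //; exact: measurable_cst.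
apply: measurable_funV_gt0; last by move=> y; apply: emp_gt0 => z; exact: q_gt0.
apply: measurable_funM; last exact: measurable_cst.
by apply: measurable_sum => i; exact: mq_l.
Qed.

Lemma integral_kernel_density b (f : X -> \bar R) : (forall y, 0 <= f y)%E ->
    measurable_fun setT f ->
  ((G b)%:E * \int[M b]_y f y = \int[nu]_y (f y * (q b y)%:E))%E.
Proof.
move=> f0 mf.
rewrite -(@ge0_integral_mscale _ _ _ (kernel_at M b) setT measurableT
  (NngNum (ltW (G_gt0 b))) f mf) //.
by apply: integral_density => // A mA; rewrite -q_density.
Qed.

Lemma integral_Phi z (f : X -> \bar R) : (forall y, 0 <= f y)%E ->
    measurable_fun setT f ->
  (\int[Phi z]_y f y = \int[nu]_y
     (f y * ((\sum_(i < N) q (z i) y) / \sum_(i < N) G (z i))%:E))%E.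
Proof.
move=> f0 mf; set S := \sum_(i < N) G (z i).
have S_gt0 : 0 < S by apply: sum_ord_gt0 => i; exact: G_gt0.
have fq_ge0 b y : (0 <= f y * (q b y)%:E)%E by rewrite mule_ge0 // lee_fin ltW.
rewrite /Phi ge0_integral_measure_sum //.
transitivity (\sum_(i < N) \int[nu]_y ((S^-1)%:E * (f y * (q (z i) y)%:E)))%E.
  apply: eq_bigr => i _; rewrite ge0_integral_mscale //= ge0_integralZl_EFin //;
    last 2 first.
  - by apply: emeasurable_funM => //; exact/measurable_EFinP.
  - by rewrite invr_ge0 ltW.
  by rewrite -integral_kernel_density // muleA -EFinM mulrC.
rewrite -ge0_integral_sum //; last 2 first.
- move=> i; apply: emeasurable_funM; first exact: measurable_cst.
  by apply: emeasurable_funM => //; exact/measurable_EFinP.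
- by move=> i y _; rewrite mule_ge0 // lee_fin invr_ge0 ltW.
apply: eq_integral => y _; under eq_bigr do rewrite muleCA -EFinM.
rewrite -ge0_sume_distrr; last by move=> i _; rewrite lee_fin mulr_ge0 ?invr_ge0 ?ltW.
by rewrite sumEFin -mulr_sumr mulrC.
Qed.

Lemma measurable_Mhat zeta t a : measurable_fun setT (Mhat zeta t a).
Proof. by apply: measurable_funM; [exact: measurable_rn | exact: measurable_cst]. Qed.

Lemma integral_Phi_Mhat zeta t a (g : X -> \bar R) : (forall y, 0 <= g y)%E ->
    measurable_fun setT g ->
  (\int[Phi (zeta t)]_y ((Mhat zeta t.+1 a y)%:E * g y) =
   (N%:R^-1)%:E * \int[M a]_y g y)%E.
Proof.
move=> g0 mg; have mMhat := measurable_Mhat zeta t.+1 a.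
rewrite integral_Phi //; last 2 first.
- by move=> y; rewrite mule_ge0 // lee_fin ltW ?Mhat_gt0.
- by apply: emeasurable_funM => //; exact/measurable_EFinP.
transitivity (((N%:R * G a)^-1)%:E * \int[nu]_y (g y * (q a y)%:E))%E; last first.
  by rewrite -integral_kernel_density // muleA -EFinM invfM mulfVK // gt_eqF ?G_gt0.
rewrite -ge0_integralZl_EFin //; last 3 first.
- by move=> y _; rewrite mule_ge0 // lee_fin ltW.
- by apply: emeasurable_funM => //; exact/measurable_EFinP/mq_l.
- by rewrite invr_ge0 ltW // mulr_gt0 ?natrN_gt0 ?G_gt0.
apply: eq_integral => y _.
rewrite muleAC -EFinM [RHS]muleCA -EFinM muleC; congr (_ * _)%E; congr (_%:E).
have := natrN_gt0; have := G_gt0 a; have := sum_ord_gt0 _ (fun i => G_gt0 (zeta t i)).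
have := sum_ord_gt0 _ (fun i => q_gt0 (zeta t i) y).
rewrite /Mhat /Defs.rn /Defs.lam /emp /= => *; field; by rewrite !gt_eqF.
Qed.

Lemma iter_int_Phi_Mhat zeta t (I : finType) (c : I -> R) (a : I -> X)
    (g : I -> X -> \bar R) :
  (forall k, 0 <= c k) -> (forall k y, 0 <= g k y)%E ->
  (forall k, measurable_fun setT (g k)) ->
  (iter_int (Phi (zeta t)) N (fun z => \sum_(i < N) \sum_(k : I)
      (c k * Mhat zeta t.+1 (a k) (z i))%:E * g k (z i)) =
   \sum_(k : I) (c k)%:E * \int[M (a k)]_y g k y)%E.
Proof.
move=> c_ge0 g_ge0 mg.
have term_ge0 k y : (0 <= (c k * Mhat zeta t.+1 (a k) y)%:E * g k y)%E.
  by rewrite mule_ge0 // lee_fin mulr_ge0 // ltW ?Mhat_gt0.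
have mterm k : measurable_fun setT
    (fun y => (c k * Mhat zeta t.+1 (a k) y)%:E * g k y)%E.
  apply: emeasurable_funM => //; apply/measurable_EFinP.
  by apply: measurable_funM; [exact: measurable_cst | exact: measurable_Mhat].
have int_term k : (\int[Phi (zeta t)]_y ((c k * Mhat zeta t.+1 (a k) y)%:E * g k y)
    = (c k / N%:R)%:E * \int[M (a k)]_y g k y)%E.
  under eq_integral do rewrite EFinM -muleA.
  rewrite ge0_integralZl_EFin //; last 2 first.
  - by move=> y _; rewrite mule_ge0 // lee_fin ltW ?Mhat_gt0.
  - by apply: emeasurable_funM => //; exact/measurable_EFinP/measurable_Mhat.
  by rewrite integral_Phi_Mhat // muleA -EFinM.
rewrite (iter_int_sum _ (Phi_setT (zeta t)) (fun y => \sum_(k : I)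
    (c k * Mhat zeta t.+1 (a k) y)%:E * g k y)%E); last 2 first.
- by move=> y; apply: sume_ge0 => k _; exact: term_ge0.
- exact: emeasurable_sum.
rewrite ge0_integral_sum //.
under eq_bigr do under eq_bigr do rewrite int_term.
rewrite exchange_big /=; apply: eq_bigr => k _.
rewrite -ge0_sume_distrl; last by move=> i _; rewrite lee_fin divr_ge0.
rewrite sumEFin sumr_const card_ord -(mulr_natr (c k / N%:R)) divfK //.
by rewrite gt_eqF ?natrN_gt0.
Qed.

(* The induction runs over finite nonnegative combinations of chains: the
   inner chain is then evaluated in closed form before a generation is
   integrated out, so only functions of a single particle need to be
   measurable. *)
Lemma evol_Mhat_chain_sum (f : (nat -> X) -> R) : (forall path, 0 <= f path) ->
    path_measurable (fun path => (f path)%:E) ->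
  forall t0 r j p zeta (I : finType) (c : I -> R) (paths : I -> nat -> X),
  (r <= j)%N -> (forall k, 0 <= c k) ->
  evol j (t0 + p) zeta
    (fun zeta' => (\sum_(k : I) c k * Mhat_chain zeta' t0 r p (paths k) f)%:E) =
  (\sum_(k : I) (c k)%:E * mc_int M r p (paths k) (fun path => (f path)%:E))%E.
Proof.
move=> f0 mf t0; elim=> [|r IH] j p zeta I c paths rj c0.
  rewrite (evol_cst _ _ _ (\sum_(k : I) c k * f (paths k))%:E) -sumEFin.
  by apply: eq_bigr => k _; rewrite EFinM.
case: j rj => // j rj.
set F := fun path => (f path)%:E.
have F_ge0 path : (0 <= F path)%E by rewrite lee_fin.
rewrite evolS -(iter_int_Phi_Mhat zeta (t0 + p) I c (fun k => paths k p)
  (fun k y => mc_int M r p.+1 (upd (paths k) p.+1 y) F)) //; last 2 first.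
- by move=> k y; exact: mc_int_ge0.
- move=> k; apply: (measurable_upd (fun path => mc_int M r p.+1 path F)).
  exact: path_measurable_mc_int.
congr (iter_int _ _ _); apply/funext => z.
rewrite -addnS (evol_ext _ _ _ _ (fun zeta' => (\sum_(u : I * 'I_N)
    (c u.1 * Mhat zeta (t0 + p.+1) (paths u.1 p) (z u.2)) *
    Mhat_chain zeta' t0 r p.+1 (upd (paths u.1) p.+1 (z u.2)) f)%:E)).
  rewrite IH // => [|u]; last by rewrite mulr_ge0 // ltW ?Mhat_gt0.
  by rewrite exchange_big pair_bigA.
move=> zeta' zeta'E; congr (_%:E); under eq_bigr do rewrite /= mulr_sumr.
rewrite pair_bigA; apply: eq_bigr => -[k i] _ /=.
rewrite zeta'E // upd_eq mulrA addnS (Mhat_ext _ zeta) //= zeta'E ?upd_neq //; lia.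
Qed.

End particle_model.

Theorem proposition7
  (d : measure_display) (X : measurableType d) (R : realType)
  (HX : countably_generated X)
  (M : R.-pker X ~> X)
  (U : X -> R) (mU : measurable_fun setT U) (HU : forall x, -1 <= U x <= 1)
  (alpha : R)
  (* assumption (H) for Q_alpha(x,dy) = G_alpha(x) M(x,dy) *)
  (nu : probability X R) (q : X -> X -> R) (eps_m eps_p : R)
  (mq : measurable_fun setT (fun xy : X * X => q xy.1 xy.2))
  (Heps_m : 0 < eps_m) (Heps_p : 0 < eps_p)
  (Hq_bnd : forall x y, eps_m <= q x y <= eps_p)
  (Hq_dens : forall (x : X) (A : set X), measurable A ->
     ((Galpha alpha U x)%:E * M x A = \int[nu]_(y in A) (q x y)%:E)%E)
  (N n m : nat) (HN : (1 <= N)%N) (Hn : (1 <= n)%N) (Hm1 : (1 <= m)%N)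
  (Hmn : (m <= n)%N)
  (x : X) (delta : R) (Hdelta : 0 < delta < 1)
  (mu : probability X R) :
  ps_expect N alpha U M mu (2 * n)
    (fun zeta =>
       (chain_int N alpha U q zeta n (2 * n) m 0 (fun _ => x)
          (fun path =>
             (if m%:R * delta < \sum_(1 <= p < m.+1) U (path p) then 1 else 0)
             * (\prod_(0 <= p < m)
                  (lam N alpha U zeta (n + p) / Galpha alpha U (path p)))
             * (hh N alpha U q zeta n (2 * n) (path 0%N)
                / hh N alpha U q zeta (n + m) (2 * n) (path m))))%:E)
  = pi_m M U x m delta.
Proof.
have q_gt0 a b : 0 < q a b by case/andP: (Hq_bnd a b) => + _; exact: lt_le_trans.
pose Ind path := if m%:R * delta < \sum_(1 <= p < m.+1) U (path p) then 1 else 0 : R.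
have Ind_ge0 path : 0 <= Ind path by rewrite /Ind; case: ifP.
have mInd : path_measurable (fun path => (Ind path)%:E).
  move=> d' T phi mphi; apply/measurable_EFinP.
  apply: measurable_fun_ifT; [|exact: measurable_cst|exact: measurable_cst].
  apply: measurable_fun_ltr; first exact: measurable_cst.
  by apply: measurable_sum => p; exact: measurableT_comp mU (mphi p).
rewrite /ps_expect -[RHS](iter_int_cst _ (probability_setT mu) N).
congr (iter_int _ _ _); apply/funext => z.
rewrite mul2n -addnn evol_add -(evol_cst M U alpha N HN n 0 (fun _ => z) (pi_m M U x m delta)).
apply: evol_ext => // zeta _; rewrite add0n.
transitivity (mc_int M m 0 (fun _ => x) (fun path => (Ind path)%:E)); last by [].
have := evol_Mhat_chain_sum M U alpha nu q N HN q_gt0 mq Hq_dens Ind Ind_ge0 mInd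
  n m n 0 zeta 'I_1 (fun _ => 1) (fun _ _ => x) Hmn (fun _ => ler01).
rewrite big_ord1 mul1e addn0 => <-.
by apply: evol_ext => // zeta' _; rewrite big_ord1 mul1r chain_int_Mhat_chain.
Qed.
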